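(* Let $d\ge 2$, $n,R\ge1$, and let ${\bf A}=\sum_{\nu=1}^R \xi_\nu\, {\bf u}^{(1)}_\nu\otimes\cdots\otimes{\bf u}^{(d)}_\nu\in\mathbb{R}^{n\times\cdots\times n}$ with $\xi_\nu\in\mathbb{R}$ and normalized skeleton vectors $\|{\bf u}^{(\ell)}_\nu\|=1$. For $\ell=1,\dots,d$ let $U^{(\ell)}=[{\bf u}^{(\ell)}_1,\dots,{\bf u}^{(\ell)}_R]\in\mathbb{R}^{n\times R}$ have singular values $\sigma_{\ell,1}\ge\sigma_{\ell,2}\ge\cdots\ge\sigma_{\ell,\min(n,R)}$, let $r_\ell\le\min(n,R)$, and let $W^{(\ell)}=Z^{(\ell)}_0D_{\ell,0}{V^{(\ell)}_0}^T$ be the rank-$r_\ell$ truncated SVD of $U^{(\ell)}$. Let ${\bf A}^0_{({\bf r})}=\boldsymbol{\xi}\times_1W^{(1)}\times_2\cdots\times_dW^{(d)}$ be the RHOSVD approximation, where $\boldsymbol{\xi}$ is the diagonal tensor with diagonal entries $\xi_1,\dots,\xi_R$. Norms are Frobenius (Euclidean) norms. (A) If one of the matrices $U^{(\ell)}$, say $U^{(1)}$, is orthogonal (its columns are mutually orthogonal), then $$\|{\bf A}-{\bf A}^0_{({\bf r})}\|\le C\,\|{\bf A}\|\sum_{\ell=1}^d\Big(\sum_{k=r_\ell+1}^{\min(n,R)}\sigma_{\ell,k}^2\Big)^{1/2}$$ with $C=1$. (B) If the decomposition is monotone, i.e., all coefficients $\xi_\nu$ and all entries of all skeleton vectors ${\bf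 u}^{(\ell)}_\nu$ are non-negative, then the same inequality holds with a constant $C$ that does not depend on ${\bf A}$.
   Context: For a tensor ${\bf T}$ and matrix $M$, ${\bf T}\times_\ell M$ denotes the $\ell$-mode product (multiplying every mode-$\ell$ fiber of ${\bf T}$ by $M$). The rank-$r_\ell$ truncated SVD of $U^{(\ell)}$ is $Z^{(\ell)}_0D_{\ell,0}{V^{(\ell)}_0}^T$, with $Z^{(\ell)}_0\in\mathbb{R}^{n\times r_\ell}$, $V^{(\ell)}_0\in\mathbb{R}^{R\times r_\ell}$ the leading left and right singular vectors and $D_{\ell,0}=\mathrm{diag}(\sigma_{\ell,1},\dots,\sigma_{\ell,r_\ell})$. *)

From mathcomp Require Import all_boot all_order all_algebra.
From mathcomp Require Import reals.
Set Implicit Arguments. Unset Strict Implicit. Unset Printing Implicit Defensive.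
Import Order.TTheory GRing.Theory Num.Theory.
Local Open Scope ring_scope.

(* An order-d tensor in K^{n x ... x n}: a function of a multi-index
   i : {ffun 'I_d -> 'I_n} (i l is the l-th index, l = 0..d-1). *)
Definition tensor (K : Type) (d n : nat) := {ffun 'I_d -> 'I_n} -> K.

Definition tnorm (K : rcfType) (d n : nat) (T : tensor K d n) : K :=
  Num.sqrt (\sum_(i : {ffun 'I_d -> 'I_n}) T i ^+ 2).

(* Tucker/CP product  xi x_1 M_1 x_2 ... x_d M_d  with xi the diagonal
   R x ... x R tensor with diagonal xi_0..xi_{R-1}, M_l : n x R.
   Entry i = sum_nu xi_nu prod_l M_l(i_l, nu). *)
Definition diag_tucker (K : rcfType) (d n R : nat) (xi : 'I_R -> K)
  (M : 'I_d -> 'M[K]_(n, R)) : tensor K d n :=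
  fun i => \sum_(nu < R) xi nu * \prod_(l < d) M l (i l) nu.

Definition rdiag (K : rcfType) (n R : nat) (s : nat -> K) (r : nat) : 'M[K]_(n, R) :=
  \matrix_(i < n, j < R) (if ((i : nat) == j) && (i < r)%N then s i else 0).

(* (Z, s, V) is a singular value decomposition of U : n x R:
   Z (n x n) and V (R x R) orthogonal, s the singular values
   s 0 >= s 1 >= ... >= s (min(n,R)-1) >= 0 (0-based indexing:
   s k = sigma_{k+1}), and U = Z * Sigma * V^T. *)
Definition is_svd (K : rcfType) (n R : nat) (U : 'M[K]_(n, R))
  (Z : 'M[K]_n) (s : nat -> K) (V : 'M[K]_R) : Prop :=
  [/\ Z^T *m Z = 1%:M, V^T *m V = 1%:M,
      (forall k, (k < minn n R)%N -> 0 <= s k),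
      (forall k k', (k <= k')%N -> (k' < minn n R)%N -> s k' <= s k)
    & U = Z *m rdiag n R s (minn n R) *m V^T].

(* The rank-r truncated SVD  Z_0 D_0 V_0^T  built from an SVD (Z, s, V):
   written with the full factors and the diagonal cut after r entries. *)
Definition trunc_svd (K : rcfType) (n R : nat) (Z : 'M[K]_n) (s : nat -> K)
  (V : 'M[K]_R) (r : nat) : 'M[K]_(n, R) :=
  Z *m rdiag n R s r *m V^T.

From mathcomp Require Import all_boot all_order all_algebra.
From mathcomp Require Import reals.
From mathcomp Require Import ring lra.
Import Order.TTheory GRing.Theory Num.Theory.
Local Open Scope ring_scope.


(* The error of the RHOSVD approximation telescopes: replacing the factors
   U_l by their truncations W_l one mode at a time writes A - A0 as a sum over
   modes m of diagonal Tucker tensors with factors W_1..W_(m-1), U_m - W_m,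
   U_(m+1)..U_d.  Every column of W_l is at most as long as the corresponding
   column of U_l (the truncation residual U_l - W_l is orthogonal to the range
   of W_l), so the rank-one structure, the triangle inequality and
   Cauchy-Schwarz bound the m-th term by |xi| |U_m - W_m|_F, and |U_m - W_m|_F^2
   is the sum of the discarded squared singular values.  Finally
   |A|^2 = sum_(nu,mu) xi_nu xi_mu prod_l <u_nu^l, u_mu^l>: the diagonal terms
   give |xi|^2, and the off-diagonal terms vanish in case (A) and are
   nonnegative in case (B), so |xi| <= |A| and C = 1 works in both cases. *)

Set Implicit Arguments. Unset Strict Implicit. Unset Printing Implicit Defensive.

Section L2Norm.
Variable K : rcfType.

Definition l2norm (I : finType) (f : I -> K) : K := Num.sqrt (\sum_i f i ^+ 2).

Lemma sumr_sqr_ge0 (I : finType) (f : I -> K) : 0 <= \sum_i f i ^+ 2.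
Proof. by apply: sumr_ge0 => i _; exact: sqr_ge0. Qed.

Lemma l2norm_ge0 (I : finType) (f : I -> K) : 0 <= l2norm f.
Proof. exact: sqrtr_ge0. Qed.

Lemma l2normK (I : finType) (f : I -> K) : l2norm f ^+ 2 = \sum_i f i ^+ 2.
Proof. by rewrite sqr_sqrtr // sumr_sqr_ge0. Qed.

Lemma eq_l2norm (I : finType) (f g : I -> K) : f =1 g -> l2norm f = l2norm g.
Proof. by move=> fg; rewrite /l2norm; under eq_bigr do rewrite fg. Qed.

Lemma l2norm0 (I : finType) : l2norm (fun _ : I => 0 : K) = 0.
Proof. by rewrite /l2norm big1 ?sqrtr0 // => i _; rewrite expr0n. Qed.

Lemma l2normZ (I : finType) (c : K) (f : I -> K) :
  l2norm (fun i => c * f i) = `|c| * l2norm f.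
Proof.
rewrite /l2norm (eq_bigr (fun i => c ^+ 2 * f i ^+ 2)) => [|i _]; last exact: exprMn.
by rewrite -mulr_sumr sqrtrM ?sqr_ge0 // sqrtr_sqr.
Qed.

Lemma l2norm_abs (I : finType) (f : I -> K) : l2norm (fun i => `|f i|) = l2norm f.
Proof.
by rewrite /l2norm; congr Num.sqrt; apply: eq_bigr => i _; rewrite real_normK ?num_real.
Qed.

Lemma cauchy_schwarz_sqr (I : finType) (a b : I -> K) :
  (\sum_i a i * b i) ^+ 2 <= (\sum_i a i ^+ 2) * (\sum_i b i ^+ 2).
Proof.
have lagrange : \sum_i \sum_j (a i * b j - a j * b i) ^+ 2 =
    2 * ((\sum_i a i ^+ 2) * (\sum_i b i ^+ 2) - (\sum_i a i * b i) ^+ 2).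
  have -> : (\sum_i a i ^+ 2) * (\sum_i b i ^+ 2) = \sum_i \sum_j a i ^+ 2 * b j ^+ 2.
    by rewrite mulr_suml; apply: eq_bigr => i _; rewrite mulr_sumr.
  have -> : (\sum_i a i * b i) ^+ 2 = \sum_i \sum_j a i * b i * (a j * b j).
    by rewrite expr2 mulr_suml; apply: eq_bigr => i _; rewrite mulr_sumr.
  transitivity (\sum_i \sum_j a i ^+ 2 * b j ^+ 2 + \sum_i \sum_j a j ^+ 2 * b i ^+ 2
                - 2 * \sum_i \sum_j a i * b i * (a j * b j)).
    rewrite mulr_sumr -big_split -sumrB /=; apply: eq_bigr => i _.
    by rewrite mulr_sumr -big_split -sumrB /=; apply: eq_bigr => j _; ring.
  by rewrite [X in _ + X - _]exchange_big /=; ring.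
have : 0 <= \sum_i \sum_j (a i * b j - a j * b i) ^+ 2.
  by apply: sumr_ge0 => i _; exact: sumr_sqr_ge0.
by rewrite lagrange pmulr_rge0 // subr_ge0.
Qed.

Lemma cauchy_schwarz (I : finType) (a b : I -> K) :
  \sum_i a i * b i <= l2norm a * l2norm b.
Proof.
have [ab_le0|ab_gt0] := lerP (\sum_i a i * b i) 0.
  by apply: le_trans ab_le0 _; rewrite mulr_ge0 ?l2norm_ge0.
rewrite -(ger0_norm (ltW ab_gt0)) -sqrtr_sqr /l2norm -sqrtrM ?sumr_sqr_ge0 //.
by rewrite ler_sqrt ?cauchy_schwarz_sqr // mulr_ge0 ?sumr_sqr_ge0.
Qed.

Lemma l2normD (I : finType) (f g : I -> K) :
  l2norm (fun i => f i + g i) <= l2norm f + l2norm g.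
Proof.
rewrite -ler_sqr ?nnegrE ?addr_ge0 ?l2norm_ge0 // sqrrD !l2normK.
have -> : \sum_i (f i + g i) ^+ 2 =
    \sum_i f i ^+ 2 + 2 * \sum_i f i * g i + \sum_i g i ^+ 2.
  by rewrite mulr_sumr -!big_split /=; apply: eq_bigr => i _; ring.
by have := cauchy_schwarz f g; lra.
Qed.

Lemma l2norm_sum (I J : finType) (F : J -> I -> K) :
  l2norm (fun i => \sum_j F j i) <= \sum_j l2norm (F j).
Proof.
elim: (index_enum J) => [|j js IH].
  by rewrite big_nil (eq_l2norm (g := fun=> 0)) ?l2norm0 // => i; rewrite big_nil.
rewrite big_cons (eq_l2norm (g := fun i => F j i + \sum_(k <- js) F k i)).
  by apply: le_trans (l2normD _ _) _; rewrite lerD2l.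
by move=> i; rewrite big_cons.
Qed.

Lemma sqrtr_prod (I : finType) (x : I -> K) : (forall i, 0 <= x i) ->
  Num.sqrt (\prod_i x i) = \prod_i Num.sqrt (x i).
Proof.
move=> x_ge0.
suff [] : 0 <= \prod_i x i /\ Num.sqrt (\prod_i x i) = \prod_i Num.sqrt (x i) by [].
apply: (big_ind2 (fun a b => 0 <= a /\ Num.sqrt a = b))
  => [|a1 a2 b1 b2 [a1_ge0 <-] [a2_ge0 <-]|//].
  by rewrite sqrtr1.
by rewrite mulr_ge0 // sqrtrM.
Qed.

Lemma l2norm_prod (I J : finType) (f : I -> J -> K) :
  l2norm (fun g : {ffun I -> J} => \prod_i f i (g i)) = \prod_i l2norm (f i).
Proof.
rewrite /l2norm (eq_bigr (fun g : {ffun I -> J} => \prod_i f i (g i) ^+ 2)) => [|g _].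
  rewrite -(bigA_distr_bigA (fun i j => f i j ^+ 2)) sqrtr_prod // => i.
  exact: sumr_sqr_ge0.
by rewrite prodrXl.
Qed.

End L2Norm.

Section DiagonalMatrices.
Variables (K : rcfType) (n R : nat).

Lemma rdiag_sub (s : nat -> K) (r m : nat) : (r <= m)%N ->
  rdiag n R s m - rdiag n R s r = rdiag n R (fun k => if (r <= k)%N then s k else 0) m.
Proof.
move=> le_rm; apply/matrixP => i j; rewrite !mxE.
case: (i == j :> nat); last by rewrite subrr.
case: (ltnP i r) => [lt_ir|le_ri] /=; last by rewrite subr0.
by rewrite (leq_trans lt_ir le_rm) subrr.
Qed.

Lemma tr_rdiag_mul_rdiag (s t : nat -> K) (r m : nat) :
  (forall k, (k < r)%N -> t k = 0) -> (rdiag n R s r)^T *m rdiag n R t m = 0.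
Proof.
move=> t0; apply/matrixP => a b; rewrite !mxE big1 // => i _; rewrite !mxE.
by case: ltnP => [/t0->|_]; rewrite ?if_same ?mulr0 // andbF mul0r.
Qed.

Lemma sum_sqr_rdiag (t : nat -> K) (m : nat) : (m <= minn n R)%N ->
  \sum_(j < R) \sum_(i < n) rdiag n R t m i j ^+ 2 = \sum_(k < m) t k ^+ 2.
Proof.
rewrite leq_min => /andP[le_mn le_mR].
rewrite (big_ord_widen _ (fun k => t k ^+ 2) le_mR) [RHS]big_mkcond /=.
apply: eq_bigr => j _; rewrite (eq_bigr (fun i : 'I_n =>
  if (i == j :> nat) then (if (j < m)%N then t j else 0) ^+ 2 else 0)); last first.
  by move=> i _; rewrite mxE; case: eqP => [->|_] //; rewrite expr0n.
rewrite -big_mkcond (big_ord1_eq _ (fun=> (if (j < m)%N then t j else 0) ^+ 2)).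
case: (ltnP j m) => [lt_jm|_]; first by rewrite (leq_trans lt_jm le_mn).
by rewrite expr0n /= if_same.
Qed.

End DiagonalMatrices.

Lemma sum_sqr_mxtrace (K : rcfType) (m n : nat) (A : 'M[K]_(m, n)) :
  \sum_j \sum_i A i j ^+ 2 = \tr (A^T *m A).
Proof.
by apply: eq_bigr => j _; rewrite mxE; apply: eq_bigr => i _; rewrite !mxE expr2.
Qed.

Lemma sum_sqr_orthogonal_mul (K : rcfType) (m n : nat) (Z : 'M[K]_m) (V : 'M[K]_n)
    (A : 'M[K]_(m, n)) : Z^T *m Z = 1%:M -> V^T *m V = 1%:M ->
  \sum_j \sum_i (Z *m A *m V^T) i j ^+ 2 = \sum_j \sum_i A i j ^+ 2.
Proof.
move=> orthZ orthV; rewrite !sum_sqr_mxtrace !trmx_mul trmxK.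
rewrite -mulmxA mxtrace_mulC !mulmxA -[_ *m V^T *m V]mulmxA orthV mulmx1.
by rewrite mxtrace_mulC !mulmxA orthZ mul1mx mxtrace_mulC.
Qed.

Section TruncatedSVD.
Variables (K : rcfType) (n R : nat) (U : 'M[K]_(n, R)) (Z : 'M[K]_n) (s : nat -> K)
  (V : 'M[K]_R) (r : nat).
Hypotheses (svdU : is_svd U Z s V) (le_r_min : (r <= minn n R)%N).

Let W := trunc_svd Z s V r.
Let tail k := if (r <= k)%N then s k else 0.

Lemma trunc_svd_residual : U - W = Z *m rdiag n R tail (minn n R) *m V^T.
Proof.
case: svdU => _ _ _ _ ->.
by rewrite /W /trunc_svd -mulmxBl -mulmxBr rdiag_sub.
Qed.

Lemma trunc_svd_residual_orthogonal : W^T *m (U - W) = 0.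
Proof.
case: svdU => orthZ _ _ _ _.
rewrite trunc_svd_residual /W /trunc_svd !trmx_mul trmxK !mulmxA.
rewrite -[V *m _ *m Z^T *m Z]mulmxA orthZ mulmx1 -[V *m _ *m rdiag _ _ _ _]mulmxA.
rewrite tr_rdiag_mul_rdiag ?mulmx0 ?mul0mx // => k lt_kr.
by rewrite /tail leqNgt lt_kr.
Qed.

Lemma trunc_svd_residual_norm :
  l2norm (fun j => l2norm (fun i => U i j - W i j))
  = Num.sqrt (\sum_(r <= k < minn n R) s k ^+ 2).
Proof.
case: (svdU) => orthZ orthV _ _ _.
rewrite /l2norm; congr Num.sqrt.
transitivity (\sum_j \sum_i (U - W) i j ^+ 2).
  apply: eq_bigr => j _; rewrite sqr_sqrtr ?sumr_sqr_ge0 //.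
  by apply: eq_bigr => i _; rewrite !mxE.
rewrite trunc_svd_residual sum_sqr_orthogonal_mul // sum_sqr_rdiag //.
rewrite big_geq_mkord [RHS]big_mkcond /=.
by apply: eq_bigr => k _; rewrite /tail; case: ifP => // _; rewrite expr0n.
Qed.

Lemma trunc_svd_col_le j : l2norm (fun i => W i j) <= l2norm (fun i => U i j).
Proof.
rewrite ler_sqrt ?sumr_sqr_ge0 //.
have cross : \sum_i W i j * (U i j - W i j) = 0.
  move/matrixP/(_ j j): trunc_svd_residual_orthogonal; rewrite !mxE => WtE0.
  by rewrite -[RHS]WtE0; apply: eq_bigr => i _; rewrite !mxE.
have -> : \sum_i U i j ^+ 2 = \sum_i W i j ^+ 2 + 2 * \sum_i W i j * (U i j - W i j)
                             + \sum_i (U i j - W i j) ^+ 2.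
  by rewrite mulr_sumr -!big_split /=; apply: eq_bigr => i _; ring.
by rewrite cross mulr0 addr0 lerDl sumr_sqr_ge0.
Qed.

End TruncatedSVD.

Lemma prodrB_telescope (K : comPzRingType) (d : nat) (a b : 'I_d -> K) :
  \prod_l a l - \prod_l b l =
  \sum_(m < d) \prod_(l < d) (if (l < m)%N then b l else if l == m then a l - b l else a l).
Proof.
pose h k := \prod_(l < d) (if (l < k)%N then b l else a l).
have -> : \prod_l a l = h 0%N by apply: eq_bigr.
have -> : \prod_l b l = h d by apply: eq_bigr => l _; rewrite ltn_ord.
rewrite -opprB -(telescope_sumr _ (leq0n d)) -sumrN big_mkord.
apply: eq_bigr => m _; rewrite opprB /h (bigD1 m) //.
rewrite [X in _ - X](bigD1 m) // [RHS](bigD1 m) //=.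
rewrite ltnn eqxx ltnSn mulrBl; congr (_ * _ - _ * _); apply: eq_bigr => l ne_lm.
  by rewrite (negbTE ne_lm).
have ne_lm_nat : (l != m :> nat) by [].
by rewrite (negbTE ne_lm) ltnS leq_eqVlt (negbTE ne_lm_nat).
Qed.

Section DiagTucker.
Variables (K : rcfType) (d n R : nat).
Implicit Types (xi : 'I_R -> K) (M U W : 'I_d -> 'M[K]_(n, R)).

Lemma tnormE (T : tensor K d n) : tnorm T = l2norm T.
Proof. by []. Qed.

Lemma tnorm_diag_tucker_le xi M :
  tnorm (diag_tucker xi M) <= \sum_nu `|xi nu| * \prod_l l2norm (fun j => M l j nu).
Proof.
rewrite tnormE; apply: le_trans (l2norm_sum _) _; apply: ler_sum => nu _.
by rewrite l2normZ (l2norm_prod (fun l j => M l j nu)).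
Qed.

Definition telescope_factor U W (m l : 'I_d) : 'M[K]_(n, R) :=
  if (l < m)%N then W l else if l == m then U l - W l else U l.

Lemma diag_tucker_sub_telescope xi U W i :
  diag_tucker xi U i - diag_tucker xi W i =
  \sum_(m < d) diag_tucker xi (telescope_factor U W m) i.
Proof.
rewrite /diag_tucker -sumrB exchange_big; apply: eq_bigr => nu _.
rewrite -mulrBr (prodrB_telescope (fun l => U l (i l) nu)) mulr_sumr.
apply: eq_bigr => m _; congr (_ * _); apply: eq_bigr => l _.
by rewrite /telescope_factor; case: ifP => // _; case: ifP => // _; rewrite !mxE.
Qed.

Lemma tnorm_diag_tucker_sub_le xi U W :
  (forall l nu, l2norm (fun j => U l j nu) <= 1) ->
  (forall l nu, l2norm (fun j => W l j nu) <= 1) ->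
  tnorm (fun i => diag_tucker xi U i - diag_tucker xi W i) <=
  l2norm xi * \sum_m l2norm (fun nu => l2norm (fun j => U m j nu - W m j nu)).
Proof.
move=> U_le1 W_le1.
have factor_le m nu : \prod_l l2norm (fun j => telescope_factor U W m l j nu)
                      <= l2norm (fun j => U m j nu - W m j nu).
  rewrite (bigD1 m) //= (@eq_l2norm _ _ _ (fun j => U m j nu - W m j nu)); last first.
    by move=> j; rewrite /telescope_factor ltnn eqxx !mxE.
  rewrite -[leRHS]mulr1 ler_wpM2l ?l2norm_ge0 //.
  apply: prodr_ile1 => l ne_lm; rewrite l2norm_ge0 /telescope_factor (negbTE ne_lm).
  by case: (l < m)%N; [exact: W_le1 | exact: U_le1].
rewrite tnormE (eq_l2norm (diag_tucker_sub_telescope xi U W)) mulr_sumr.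
apply: le_trans (l2norm_sum _) _; apply: ler_sum => m _.
apply: le_trans (tnorm_diag_tucker_le _ _) _.
apply: (@le_trans _ _ (\sum_nu `|xi nu| * l2norm (fun j => U m j nu - W m j nu))).
  by apply: ler_sum => nu _; rewrite ler_wpM2l ?factor_le.
by rewrite -(l2norm_abs xi); exact: cauchy_schwarz.
Qed.

End DiagTucker.

Lemma rhosvd_error_le (K : rcfType) (d n R : nat) (r : 'I_d -> nat) (xi : 'I_R -> K)
    (U : 'I_d -> 'M[K]_(n, R)) (Z : 'I_d -> 'M[K]_n) (s : 'I_d -> nat -> K)
    (V : 'I_d -> 'M[K]_R) :
  (forall l, (r l <= minn n R)%N) ->
  (forall l nu, \sum_i U l i nu ^+ 2 = 1) ->
  (forall l, is_svd (U l) (Z l) (s l) (V l)) ->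
  tnorm (fun i => diag_tucker xi U i
           - diag_tucker xi (fun l => trunc_svd (Z l) (s l) (V l) (r l)) i)
  <= l2norm xi * \sum_l Num.sqrt (\sum_(r l <= k < minn n R) s l k ^+ 2).
Proof.
move=> le_r_min U_unit svdU.
have U_col1 l nu : l2norm (fun i => U l i nu) = 1 by rewrite /l2norm U_unit sqrtr1.
apply: le_trans (tnorm_diag_tucker_sub_le _ _ _) _ => [l nu|l nu|].
- by rewrite U_col1.
- by rewrite -(U_col1 l nu) trunc_svd_col_le.
rewrite (eq_bigr _ (fun l _ => trunc_svd_residual_norm (svdU l) (le_r_min l))).
by rewrite ler_wpM2l ?l2norm_ge0.
Qed.

Lemma tnorm_diag_tucker_sqr (K : rcfType) (d n R : nat) (xi : 'I_R -> K)
    (U : 'I_d -> 'M[K]_(n, R)) :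
  tnorm (diag_tucker xi U) ^+ 2 =
  \sum_nu \sum_mu xi nu * xi mu * \prod_l (\sum_j U l j nu * U l j mu).
Proof.
rewrite tnormE l2normK /diag_tucker.
transitivity (\sum_(i : {ffun 'I_d -> 'I_n}) \sum_nu \sum_mu
    xi nu * xi mu * \prod_l (U l (i l) nu * U l (i l) mu)).
  apply: eq_bigr => i _; rewrite expr2 mulr_suml; apply: eq_bigr => nu _.
  by rewrite mulr_sumr; apply: eq_bigr => mu _; rewrite big_split /=; ring.
rewrite exchange_big; apply: eq_bigr => nu _; rewrite exchange_big; apply: eq_bigr => mu _.
by rewrite -mulr_sumr (bigA_distr_bigA (fun l j => U l j nu * U l j mu)).
Qed.

Lemma l2norm_le_tnorm_diag_tucker (K : rcfType) (d n R : nat) (xi : 'I_R -> K)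
    (U : 'I_d -> 'M[K]_(n, R)) :
  (forall l nu, \sum_i U l i nu ^+ 2 = 1) ->
  (forall nu mu, nu != mu ->
     0 <= xi nu * xi mu * \prod_l (\sum_j U l j nu * U l j mu)) ->
  l2norm xi <= tnorm (diag_tucker xi U).
Proof.
move=> U_unit cross_ge0.
rewrite -ler_sqr ?nnegrE ?l2norm_ge0 ?sqrtr_ge0 // l2normK tnorm_diag_tucker_sqr.
apply: ler_sum => nu _; rewrite (bigD1 nu) //= big1 => [|l _]; last first.
  by rewrite -(U_unit l nu); apply: eq_bigr => j _; rewrite expr2.
rewrite mulr1 -expr2 lerDl sumr_ge0 // => mu ne_mu_nu.
by rewrite cross_ge0 // eq_sym.
Qed.

Lemma rhosvd_error_le_tnorm (K : rcfType) (d n R : nat) (r : 'I_d -> nat)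
    (xi : 'I_R -> K) (U : 'I_d -> 'M[K]_(n, R)) (Z : 'I_d -> 'M[K]_n)
    (s : 'I_d -> nat -> K) (V : 'I_d -> 'M[K]_R) :
  (forall l, (r l <= minn n R)%N) ->
  (forall l nu, \sum_i U l i nu ^+ 2 = 1) ->
  (forall l, is_svd (U l) (Z l) (s l) (V l)) ->
  (forall nu mu, nu != mu ->
     0 <= xi nu * xi mu * \prod_l (\sum_j U l j nu * U l j mu)) ->
  tnorm (fun i => diag_tucker xi U i
           - diag_tucker xi (fun l => trunc_svd (Z l) (s l) (V l) (r l)) i)
  <= tnorm (diag_tucker xi U) * \sum_l Num.sqrt (\sum_(r l <= k < minn n R) s l k ^+ 2).
Proof.
move=> le_r_min U_unit svdU cross_ge0.
apply: le_trans (rhosvd_error_le xi le_r_min U_unit svdU) _.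
rewrite ler_wpM2r ?l2norm_le_tnorm_diag_tucker //.
by apply: sumr_ge0 => l _; exact: sqrtr_ge0.
Qed.

Unset Implicit Arguments.

Theorem corollary2p4 (K : realType) (d n R : nat)
  (hd : (2 <= d)%N) (hn : (1 <= n)%N) (hR : (1 <= R)%N) :
  (* (A) *)
  (forall (r : 'I_d -> nat) (xi : 'I_R -> K) (U : 'I_d -> 'M[K]_(n, R))
          (Z : 'I_d -> 'M[K]_n) (s : 'I_d -> nat -> K) (V : 'I_d -> 'M[K]_R),
     (forall l, (r l <= minn n R)%N) ->
     (forall l (nu : 'I_R), \sum_(i < n) U l i nu ^+ 2 = 1) ->
     (forall l, is_svd (U l) (Z l) (s l) (V l)) ->
     (exists l0 : 'I_d, forall nu mu : 'I_R, nu != mu ->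
        \sum_(i < n) U l0 i nu * U l0 i mu = 0) ->
     tnorm (fun i => diag_tucker xi U i
              - diag_tucker xi (fun l => trunc_svd (Z l) (s l) (V l) (r l)) i)
     <= 1 * tnorm (diag_tucker xi U) *
        \sum_(l < d) Num.sqrt (\sum_(r l <= k < minn n R) s l k ^+ 2))
  /\
  (* (B) *)
  (exists C : K,
   forall (r : 'I_d -> nat) (xi : 'I_R -> K) (U : 'I_d -> 'M[K]_(n, R))
          (Z : 'I_d -> 'M[K]_n) (s : 'I_d -> nat -> K) (V : 'I_d -> 'M[K]_R),
     (forall l, (r l <= minn n R)%N) ->
     (forall l (nu : 'I_R), \sum_(i < n) U l i nu ^+ 2 = 1) ->
     (forall l, is_svd (U l) (Z l) (s l) (V l)) ->
     (forall nu, 0 <= xi nu) ->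
     (forall l i nu, 0 <= U l i nu) ->
     tnorm (fun i => diag_tucker xi U i
              - diag_tucker xi (fun l => trunc_svd (Z l) (s l) (V l) (r l)) i)
     <= C * tnorm (diag_tucker xi U) *
        \sum_(l < d) Num.sqrt (\sum_(r l <= k < minn n R) s l k ^+ 2)).
Proof.
split=> [r xi U Z s V le_r_min U_unit svdU [l0 orth_l0]|].
  rewrite mul1r; apply: rhosvd_error_le_tnorm => // nu mu ne_nu_mu.
  by rewrite (bigD1 l0) //= orth_l0 // mul0r mulr0.
exists 1 => r xi U Z s V le_r_min U_unit svdU xi_ge0 U_ge0.
rewrite mul1r; apply: rhosvd_error_le_tnorm => // nu mu _.
rewrite !mulr_ge0 ?prodr_ge0 // => l _.
by apply: sumr_ge0 => j _; exact: mulr_ge0.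
Qed.
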